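(* Let $G$ be a connected graph with $n\ge 3$ vertices and $e(G)=n+k$ edges, where $1\le k\le 10$. Let $v$ be a vertex of $G$ with $d(v)=1$. If $R(G-v)>\sqrt{n-2}+\frac{2(k+1)}{(n-1)\sqrt{n-2}}$, then $R(G)>\sqrt{n-1}+\frac{2(k+1)}{n\sqrt{n-1}}$.
   Context: All graphs are finite and simple; $e(G)$ is the number of edges and $G-v$ is the graph obtained by deleting the vertex $v$ and its incident edges. For a vertex $u$, $d(u)$ is its degree (in the graph under consideration). The Randić index is $R(G)=\sum_{\{u,v\}\in E(G)} \frac{1}{\sqrt{d(u)d(v)}}$. *)

(* A simple graph is a symmetric irreflexive relation e on a finType T. *)
From HB Require Import structures.
From mathcomp Require Import all_boot all_order all_algebra.
Set Implicit Arguments. Unset Strict Implicit. Unset Printing Implicit Defensive.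
Import Order.TTheory GRing.Theory Num.Theory.

Definition deg_in (T : finType) (e : rel T) (S : {set T}) (u : T) : nat :=
  #|[set w in S | e u w]|.

Definition edges_in (T : finType) (e : rel T) (S : {set T}) : {set {set T}} :=
  [set E : {set T} | [exists u, exists w,
     [&& u \in S, w \in S, e u w & E == [set u; w]]]].

Definition randic_in (R : rcfType) (T : finType) (e : rel T) (S : {set T}) : R :=
  \sum_(E in edges_in e S) (Num.sqrt ((\prod_(x in E) deg_in e S x)%:R))^-1.

From HB Require Import structures.
From mathcomp Require Import all_boot all_order all_algebra.
From mathcomp Require Import ring lra.
Import Order.TTheory GRing.Theory Num.Theory.
Set Implicit Arguments.
Unset Strict Implicit.
Unset Printing Implicit Defensive.
Local Open Scope ring_scope.

(* Let u be the neighbour of the pendant vertex v and a its degree in G - v.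
   Adding v back creates the edge uv of weight 1/sqrt(a+1) and raises d(u) from
   a to a+1; each of the a edges uw loses at most 1/sqrt a - 1/sqrt(a+1) since
   d(w) >= 1, and all other edges are unchanged.  Hence
   R(G) >= R(G-v) + 1/sqrt(a+1) - a (1/sqrt a - 1/sqrt(a+1))
         = R(G-v) + sqrt(a+1) - sqrt a
         >= R(G-v) + sqrt(n-1) - sqrt(n-2),
   using a <= n-2 and the concavity of sqrt.  The bound on R(G-v) then gives the
   bound on R(G) because m sqrt(m-1) increases with m. *)

Definition edge_weight (R : rcfType) (T : finType) (d : T -> nat) (E : {set T}) : R :=
  (Num.sqrt ((\prod_(x in E) d x)%:R))^-1.

Lemma randic_inE (R : rcfType) (T : finType) (e : rel T) (S : {set T}) :
  randic_in R e S = \sum_(E in edges_in e S) edge_weight R (deg_in e S) E.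
Proof. by []. Qed.

Lemma edge_weight2 (R : rcfType) (T : finType) (d : T -> nat) (x y : T) :
  x != y -> edge_weight R d [set x; y] = (Num.sqrt ((d x)%:R * (d y)%:R))^-1.
Proof. by move=> xy; rewrite /edge_weight big_setU1 ?big_set1 ?inE // natrM. Qed.

Section InducedSubgraph.
Variables (T : finType) (e : rel T).

Lemma edges_in_subset (S E : {set T}) : E \in edges_in e S -> E \subset S.
Proof.
rewrite inE => /existsP [x /existsP [y /and4P [xS yS _ /eqP ->]]].
by apply/subsetP => z; rewrite !inE => /orP [] /eqP ->.
Qed.

Lemma deg_in_lt_card (S : {set T}) (x : T) :
  irreflexive e -> (deg_in e S x < #|T|)%N.
Proof.
move=> e_irr; rewrite /deg_in -cardsT; apply: proper_card; rewrite properT.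
by apply/negP => /eqP full; have := in_setT x; rewrite -full !inE e_irr andbF.
Qed.

Hypothesis e_sym : symmetric e.

Lemma edges_in_at (S E : {set T}) (x : T) : E \in edges_in e S -> x \in E ->
  exists2 w, w \in [set w in S | e x w] & E = [set x; w].
Proof.
rewrite inE => /existsP [a /existsP [b /and4P [aS bS eab /eqP ->]]].
by rewrite !inE => /orP [] /eqP ->; [exists b | exists a; rewrite 1?setUC];
  rewrite // inE ?aS ?bS // e_sym.
Qed.

Hypothesis e_irr : irreflexive e.

Lemma card_edges_at (S : {set T}) (x : T) : x \in S ->
  #|[set E in edges_in e S | x \in E]| = deg_in e S x.
Proof.
move=> xS; rewrite /deg_in -(card_in_imset (f := fun w => [set x; w])); last first.
  move=> w1 w2; rewrite !inE => /andP [_ xw1] _ eq12.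
  have : w1 \in [set x; w2] by rewrite -eq12 !inE eqxx orbT.
  by rewrite !inE => /orP [/eqP w1x | /eqP //]; move: xw1; rewrite w1x e_irr.
apply: eq_card => E; apply/idP/imsetP.
- by rewrite inE => /andP [ES xE]; have [w wN ->] := edges_in_at ES xE; exists w.
- move=> [w]; rewrite !inE => /andP [wS xw] ->; rewrite !inE eqxx andbT.
  by apply/existsP; exists x; apply/existsP; exists w; rewrite xS wS xw eqxx.
Qed.

End InducedSubgraph.

Section RealInequalities.
Variable R : rcfType.

Lemma divr_sqrtr (x : R) : 0 <= x -> x / Num.sqrt x = Num.sqrt x.
Proof.
move=> x_ge0; have [->|x_neq0] := eqVneq x 0; first by rewrite sqrtr0 mul0r.
have s_neq0 : Num.sqrt x != 0 by rewrite gt_eqF // sqrtr_gt0 lt_def x_neq0.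
by rewrite -{1}(sqr_sqrtr x_ge0) expr2 mulfK.
Qed.

Lemma sqrt_succ_sub_antitone (a b : R) : 0 <= a -> a <= b ->
  Num.sqrt (b + 1) - Num.sqrt b <= Num.sqrt (a + 1) - Num.sqrt a.
Proof.
(* sqrt(x+1) - sqrt x = 1 / (sqrt(x+1) + sqrt x), and the denominator grows. *)
move=> a_ge0 ab; have b_ge0 : 0 <= b by lra.
have sqrt_succ_sub (x : R) : 0 <= x ->
    Num.sqrt (x + 1) - Num.sqrt x = (Num.sqrt (x + 1) + Num.sqrt x)^-1.
  move=> x_ge0; apply/esym/mulr1_eq.
  rewrite mulrC -subr_sqr !sqr_sqrtr //; [ring | lra].
rewrite !sqrt_succ_sub // lef_pV2 ?posrE ?ltr_wpDr ?sqrtr_ge0 ?sqrtr_gt0 //; try lra.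
by rewrite lerD // ler_sqrt //; lra.
Qed.

Lemma inv_sqrt_succ_gap (A B : R) : 1 <= A -> 1 <= B ->
  (Num.sqrt (A * B))^-1 + ((Num.sqrt (A + 1))^-1 - (Num.sqrt A)^-1)
    <= (Num.sqrt ((A + 1) * B))^-1.
Proof.
(* The difference is (1/sqrt A - 1/sqrt(A+1)) (1 - 1/sqrt B) >= 0. *)
move=> A_ge1 B_ge1; rewrite !sqrtrM ?invfM; try lra.
have sA : 1 <= Num.sqrt A by rewrite -sqrtr1 ler_sqrt //; lra.
have sA1 : Num.sqrt A <= Num.sqrt (A + 1) by rewrite ler_sqrt; lra.
have sB : 1 <= Num.sqrt B by rewrite -sqrtr1 ler_sqrt //; lra.
have : (Num.sqrt (A + 1))^-1 <= (Num.sqrt A)^-1 by rewrite lef_pV2 // posrE; lra.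
have : (Num.sqrt B)^-1 <= 1 by rewrite invf_le1; lra.
have : 0 <= (Num.sqrt B)^-1 by rewrite invr_ge0; lra.
have : 0 <= (Num.sqrt (A + 1))^-1 by rewrite invr_ge0; lra.
nra.
Qed.

Lemma inv_sqrt_succ_telescope (a : R) : 0 <= a ->
  (Num.sqrt (a + 1))^-1 + a * ((Num.sqrt (a + 1))^-1 - (Num.sqrt a)^-1)
    = Num.sqrt (a + 1) - Num.sqrt a.
Proof.
move=> a_ge0; have a1_ge0 : 0 <= a + 1 by lra.
rewrite -[X in _ = X - _](divr_sqrtr a1_ge0) -[X in _ = _ - X](divr_sqrtr a_ge0).
ring.
Qed.

Lemma randic_threshold_step (N a K : R) : 3 <= N -> 0 <= a -> a + 2 <= N -> 0 <= K ->
  Num.sqrt (N - 1) + K / (N * Num.sqrt (N - 1)) <=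
  Num.sqrt (N - 2) + K / ((N - 1) * Num.sqrt (N - 2)) + (Num.sqrt (a + 1) - Num.sqrt a).
Proof.
move=> N_ge3 a_ge0 aN K_ge0.
have := @sqrt_succ_sub_antitone a (N - 2) a_ge0 ltac:(lra).
rewrite (_ : N - 2 + 1 = N - 1); last by ring.
have s2_gt0 : 0 < Num.sqrt (N - 2) by rewrite sqrtr_gt0; lra.
have s21 : Num.sqrt (N - 2) <= Num.sqrt (N - 1) by rewrite ler_sqrt; lra.
have D_gt0 : 0 < (N - 1) * Num.sqrt (N - 2) by apply: mulr_gt0; lra.
have DD' : (N - 1) * Num.sqrt (N - 2) <= N * Num.sqrt (N - 1) by apply: ler_pM; lra.
have : K / (N * Num.sqrt (N - 1)) <= K / ((N - 1) * Num.sqrt (N - 2)).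
  by rewrite ler_wpM2l // lef_pV2 ?posrE //; lra.
lra.
Qed.

End RealInequalities.

Section PendantVertex.
Variables (T : finType) (e : rel T) (u v : T).
Hypotheses (e_sym : symmetric e) (e_irr : irreflexive e).
Hypothesis v_pendant : forall w, e v w = (w == u).

Lemma pendant_neq : u != v.
Proof. by apply/eqP => uv; have := v_pendant v; rewrite e_irr -uv eqxx. Qed.

Lemma deg_in_pendant_eq1 : deg_in e setT v = 1%N.
Proof. by rewrite /deg_in -(cards1 u); apply: eq_card => w; rewrite !inE v_pendant. Qed.

Lemma deg_in_setT_pendant (x : T) : x != v ->
  deg_in e setT x = ((x == u) + deg_in e [set~ v] x)%N.
Proof.
move=> xv; rewrite /deg_in (cardsD1 v) !inE e_sym v_pendant; congr (_ + _)%N.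
by apply: eq_card => w; rewrite !inE; case: (w == v).
Qed.

Lemma edges_in_setT_pendant (E : {set T}) :
  (E \in edges_in e setT) = (E == [set u; v]) || (E \in edges_in e [set~ v]).
Proof.
rewrite !inE; apply/idP/idP.
- case/existsP=> a /existsP [b] /and4P [_ _ ab /eqP ->].
  have [av|av] := eqVneq a v.
    by move: ab; rewrite av v_pendant => /eqP ->; rewrite setUC eqxx.
  have [bv|bv] := eqVneq b v.
    by move: ab; rewrite bv e_sym v_pendant => /eqP ->; rewrite eqxx.
  by apply/orP; right; apply/existsP; exists a; apply/existsP; exists b;
    rewrite !inE av bv ab eqxx.
- case/orP => [/eqP ->|].
    apply/existsP; exists u; apply/existsP; exists v.
    by rewrite !inE e_sym v_pendant !eqxx.
  case/existsP=> a /existsP [b] /and4P [_ _ ab /eqP ->].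
  by apply/existsP; exists a; apply/existsP; exists b; rewrite !inE ab eqxx.
Qed.

Lemma pendant_edge_notin : [set u; v] \notin edges_in e [set~ v].
Proof.
by apply/negP => /edges_in_subset/subsetP/(_ v); rewrite !inE eqxx orbT => /(_ isT).
Qed.

Variable R : rcfType.
Local Notation dG := (deg_in e setT).
Local Notation dS := (deg_in e [set~ v]).
Local Notation a := ((dS u)%:R : R).

Lemma randic_in_setT_pendant :
  randic_in R e setT =
    (Num.sqrt (a + 1))^-1 + \sum_(E in edges_in e [set~ v]) edge_weight R dG E.
Proof.
rewrite randic_inE (bigD1 [set u; v]) /=; last by rewrite edges_in_setT_pendant eqxx.
congr (_ + _).
  rewrite edge_weight2 ?pendant_neq // deg_in_pendant_eq1 mulr1.
  by rewrite deg_in_setT_pendant ?pendant_neq // eqxx add1n -natr1.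
apply: eq_bigl => E; rewrite edges_in_setT_pendant.
by case: eqP => [->|_] /=; [rewrite (negbTE pendant_edge_notin) | rewrite andbT].
Qed.

Lemma edge_weight_pendant (E : {set T}) : E \in edges_in e [set~ v] ->
  edge_weight R dS E + (u \in E)%:R * ((Num.sqrt (a + 1))^-1 - (Num.sqrt a)^-1)
    <= edge_weight R dG E.
Proof.
move=> ES; have [uE|uNE] := boolP (u \in E); last first.
  suff -> : edge_weight R dG E = edge_weight R dS E by rewrite mul0r addr0.
  rewrite /edge_weight; do 3 f_equal; apply: eq_bigr => x xE.
  have /subsetP/(_ x xE) := edges_in_subset ES; rewrite !inE => xv.
  have xu : x != u by apply: contraNneq uNE => <-.
  by rewrite deg_in_setT_pendant // (negbTE xu).
have [w] := edges_in_at e_sym ES uE; rewrite !inE => /andP [wv uw] ->.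
have wu : w != u by apply: contraTneq uw => ->; rewrite e_irr.
have dSu : (1 <= dS u)%N by apply/card_gt0P; exists w; rewrite !inE wv uw.
have dSw : (1 <= dS w)%N.
  by apply/card_gt0P; exists u; rewrite !inE pendant_neq e_sym uw.
rewrite !edge_weight2 1?eq_sym // mul1r !deg_in_setT_pendant ?pendant_neq //.
rewrite eqxx (negbTE wu) add1n add0n -natr1.
by apply: inv_sqrt_succ_gap; rewrite ler1n.
Qed.

Lemma randic_in_pendant_ge :
  randic_in R e [set~ v] + (Num.sqrt (a + 1) - Num.sqrt a) <= randic_in R e setT.
Proof.
have := ler_sum (index_enum _) edge_weight_pendant.
rewrite big_split -mulr_suml /=.
have -> : \sum_(E in edges_in e [set~ v]) (u \in E)%:R = a.
  rewrite -(card_edges_at e_sym e_irr (_ : u \in [set~ v])) ?inE ?pendant_neq //.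
  rewrite -sum1_card natr_sum [LHS]big_mkcond [RHS]big_mkcond.
  by apply: eq_bigr => E _; rewrite inE; case: (E \in _); case: (u \in E).
have := inv_sqrt_succ_telescope (ler0n R (dS u)).
rewrite randic_in_setT_pendant randic_inE; lra.
Qed.

End PendantVertex.

Theorem lemma2p10 (R : rcfType) (T : finType) (e : rel T) (n k : nat) (v : T) :
  symmetric e -> irreflexive e ->
  (forall x y : T, connect e x y) ->
  #|T| = n -> (3 <= n)%N ->
  #|edges_in e setT| = (n + k)%N -> (1 <= k <= 10)%N ->
  deg_in e setT v = 1%N ->
  randic_in R e [set~ v] >
    Num.sqrt (n%:R - 2) + 2 * (k%:R + 1) / ((n%:R - 1) * Num.sqrt (n%:R - 2)) ->
  randic_in R e setT >
    Num.sqrt (n%:R - 1) + 2 * (k%:R + 1) / (n%:R * Num.sqrt (n%:R - 1)).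
Proof.
move=> e_sym e_irr _ card_T n_ge3 _ _ deg_v R_Gv.
have /cards1P [u N_v] : #|[set w in setT | e v w]| == 1%N by rewrite -[X in _ == X]deg_v.
have v_pendant w : e v w = (w == u) by rewrite -in_set1 -N_v !inE.
set a := deg_in e [set~ v] u.
have a_le : (a + 2 <= n)%N.
  have := deg_in_lt_card setT u e_irr.
  rewrite (deg_in_setT_pendant e_sym v_pendant) ?(pendant_neq e_irr v_pendant) //.
  by rewrite eqxx card_T addn2.
have := randic_in_pendant_ge e_sym e_irr v_pendant R.
have nR_ge3 : 3 <= n%:R :> R by rewrite (ler_nat R 3).
have aR_le : a%:R + 2 <= n%:R :> R by rewrite -(natrD R a 2) ler_nat.
have K_ge0 : 0 <= 2 * (k%:R + 1) :> R by rewrite mulr_ge0 ?addr_ge0.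
have := randic_threshold_step nR_ge3 (ler0n R a) aR_le K_ge0.
lra.
Qed.
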